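(* Let $u=0$, $\theta=1$ and $m\in\mathbb N$. If $y_1<y_2<0$, then $D_{y_1}\subseteq D_{y_2}$.
   Context: With $u=0$, $\theta=1$ and $m\in\mathbb N$ fixed, for $y<0$ let $D_y$ be the set of $\mu\in\mathbb C$ such that every root $\xi$ of the polynomial equation $\xi^{m+1}-\xi^m=y\,\xi^{m+1}-y\mu\,\xi$ satisfies $|\xi|<1$. *)

From mathcomp Require Import all_boot all_order all_algebra.
From mathcomp Require Import complex.
Set Implicit Arguments. Unset Strict Implicit. Unset Printing Implicit Defensive.
Import Order.TTheory GRing.Theory Num.Theory.
Local Open Scope ring_scope.
Local Open Scope complex_scope.

Definition D (R : rcfType) (m : nat) (y : R) : R[i] -> Prop :=
  fun mu => forall xi : R[i],
    xi ^+ m.+1 - xi ^+ m = y%:C * xi ^+ m.+1 - y%:C * mu * xi ->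
    `|xi| < 1.

From mathcomp Require Import all_boot all_order all_algebra.
From mathcomp Require Import complex.
From mathcomp Require Import ring.
Import Order.TTheory GRing.Theory Num.Theory.
Local Open Scope ring_scope.
Local Open Scope complex_scope.

(* For m = n + 1 the equation defining D_y reads xi * P_y(xi) = 0 with
   P_y = stab_poly n y mu = (1 - y) X^(n+1) - X^n + y mu.  If all roots of a
   polynomial p lie in the open disk of radius |z|, then Re (z p'(z) / p(z)),
   a sum of terms Re (z / (z - a)), is positive.  Now let xi be a root of P_y2
   with |xi| >= 1 and k = y1 / y2 > 1.  Then P_y1(xi) = (k - 1) xi^n (1 - xi)
   and xi P_y1'(xi) = xi^n (a xi - n) with a = (n + 1)(1 - y1) >= n, so
   Re (xi P_y1'(xi) / P_y1(xi)) = Re ((a xi - n) / (1 - xi)) / (k - 1) <= 0: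
   P_y1 must have a root outside the open unit disk. *)

Section LogDeriv.
Context {C : numClosedFieldType}.
Implicit Types (a b z : C) (p : {poly C}).

Lemma Re_div_subr_gt0 a z : `|a| < `|z| -> 0 < 'Re (z / (z - a)).
Proof.
move=> ltaz; have z_neq0 : z != 0 by rewrite -normr_gt0 (le_lt_trans _ ltaz).
have -> : z / (z - a) = (1 - a / z)^-1 by rewrite -invf_div mulrBl divff.
have Re_pos : 0 < 'Re (1 - a / z).
  rewrite raddfB /= (Creal_ReP 1 (real1 _)) subr_gt0.
  rewrite (le_lt_trans (leif_Re_Creal _).1) //.
  by rewrite normf_div ltr_pdivrMr ?normr_gt0 // mul1r.
rewrite ReV divr_gt0 // exprn_gt0 // normr_gt0.
by apply: contraTneq Re_pos => ->; rewrite raddf0 ltxx.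
Qed.

Lemma logderiv_prod_XsubC (rs : seq C) z : z \notin rs ->
  let Q := \prod_(a <- rs) ('X - a%:P) in
  Q^`().[z] / Q.[z] = \sum_(a <- rs) (z - a)^-1.
Proof.
elim: rs => [|a rs IH] /=; first by rewrite big_nil derivC horner0 mul0r big_nil.
rewrite inE negb_or => /andP[za zrs].
have Qz : (\prod_(b <- rs) ('X - b%:P)).[z] != 0.
  rewrite horner_prod prodf_seq_neq0; apply/allP => b b_rs.
  by rewrite hornerXsubC subr_eq0; apply: contraNneq zrs => ->.
rewrite !big_cons derivM derivXsubC mul1r !hornerE -IH //.
by field; rewrite Qz subr_eq0 za.
Qed.

Lemma Re_logderiv_gt0 p z : (1 < size p)%N ->
  (forall a, root p a -> `|a| < `|z|) -> 0 < 'Re (z * p^`().[z] / p.[z]).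
Proof.
move=> size_p roots_p; have [rs def_p] := closed_field_poly_normal p.
have c_neq0 : lead_coef p != 0 by rewrite lead_coef_eq0 -size_poly_gt0 ltnW.
have root_rs a : a \in rs -> `|a| < `|z|.
  by move=> a_rs; apply: roots_p; rewrite def_p rootZ // root_prod_XsubC.
have z_rs : z \notin rs by apply/negP => /root_rs; rewrite ltxx.
rewrite def_p derivZ !hornerZ -mulrA invfM mulrACA mulfV // mul1r.
rewrite logderiv_prod_XsubC // mulr_sumr raddf_sum /=.
case: rs def_p root_rs {z_rs} => [|a rs] def_p root_rs.
  by move: size_p; rewrite def_p big_nil size_scale // size_poly1.
rewrite big_cons ltr_wpDr ?Re_div_subr_gt0 ?root_rs ?mem_head //.
rewrite big_seq sumr_ge0 // => b b_rs.
by rewrite ltW // Re_div_subr_gt0 // root_rs // mem_behead.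
Qed.

Lemma Re_div_1subr_le0 a b z : 0 <= b <= a -> 1 <= `|z| ->
  'Re ((a * z - b) / (1 - z)) <= 0.
Proof.
case/andP => b_ge0 le_ba z_ge1; have a_ge0 := le_trans b_ge0 le_ba.
have [->|z_neq1] := eqVneq z 1; first by rewrite subrr invr0 mulr0 raddf0.
have v_neq0 : 1 - z != 0 by rewrite subr_eq0 eq_sym.
set u := a * z - b; set v := 1 - z.
have num_le0 : u * v^* + u^* * v <= 0.
  have -> : u * v^* + u^* * v =
      - ((a + b) * `|z - 1| ^+ 2 + (a - b) * (`|z| ^+ 2 - 1)).
    rewrite !normCK /u /v !rmorphB rmorphM rmorph1 /=.
    by rewrite (conj_Creal (ger0_real a_ge0)) (conj_Creal (ger0_real b_ge0)); ring.
  by rewrite oppr_le0 addr_ge0 ?mulr_ge0 ?subr_ge0 ?exprn_ege1 ?addr_ge0.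
rewrite ReE; have -> : u / v + (u / v)^* = (u * v^* + u^* * v) / `|v| ^+ 2.
  by rewrite normCK fmorph_div; field; rewrite conjC_eq0 v_neq0.
by rewrite mulr_le0_ge0 ?mulr_le0_ge0 ?invr_ge0 ?exprn_ge0.
Qed.
End LogDeriv.

Section StabPoly.
Context {C : numClosedFieldType}.
Implicit Types (a k y mu z : C).

Definition stab_poly n y mu : {poly C} := (1 - y) *: 'X^(n.+1) - 'X^n + (y * mu)%:P.

Lemma horner_stab_poly n y mu z :
  (stab_poly n y mu).[z] = (1 - y) * z ^+ n.+1 - z ^+ n + y * mu.
Proof. by rewrite !hornerE. Qed.

Lemma stab_equationE n y mu z :
  (z ^+ n.+2 - z ^+ n.+1 = y * z ^+ n.+2 - y * mu * z) <->
  z * (stab_poly n y mu).[z] = 0.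
Proof.
rewrite horner_stab_poly.
have <- : z ^+ n.+2 - z ^+ n.+1 - (y * z ^+ n.+2 - y * mu * z) =
    z * ((1 - y) * z ^+ n.+1 - z ^+ n + y * mu) by rewrite !exprS; ring.
by split => [->|/eqP]; [rewrite subrr | rewrite subr_eq0 => /eqP].
Qed.

Lemma size_stab_poly_gt1 n y mu : y != 1 -> (1 < size (stab_poly n y mu))%N.
Proof.
move=> y_neq1; rewrite ltnNge; apply: contra y_neq1 => /leq_sizeP/(_ n.+1 isT).
rewrite !coefE eqxx gtn_eqF //= mulr1 subr0 addr0 => /eqP.
by rewrite subr_eq0 eq_sym.
Qed.

Lemma stab_poly_deriv n y mu z :
  z * (stab_poly n y mu)^`().[z] = z ^+ n * ((1 - y) *+ n.+1 * z - n%:R).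
Proof.
rewrite !derivE !hornerE !hornerMn !hornerXn.
by case: n => [|n] /=; rewrite ?exprS; ring.
Qed.

Lemma horner_stab_poly_rescale n y mu k z : root (stab_poly n y mu) z ->
  (stab_poly n (k * y) mu).[z] = (k - 1) * z ^+ n * (1 - z).
Proof.
rewrite rootE !horner_stab_poly => /eqP root_z.
have -> : (1 - k * y) * z ^+ n.+1 - z ^+ n + k * y * mu =
    k * ((1 - y) * z ^+ n.+1 - z ^+ n + y * mu) + (k - 1) * z ^+ n * (1 - z).
  by rewrite exprS; ring.
by rewrite root_z mulr0 add0r.
Qed.

Lemma stab_roots_in_disk_mono n y1 y2 mu : y1 < y2 -> y2 < 0 ->
    (forall a, root (stab_poly n y1 mu) a -> `|a| < 1) ->
  forall z, root (stab_poly n y2 mu) z -> `|z| < 1.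
Proof.
move=> lt_y12 y2_lt0 roots1 z root2.
rewrite real_ltNge ?normr_real ?real1 //; apply/negP => z_ge1.
have y1_lt0 := lt_trans lt_y12 y2_lt0.
set k := y1 / y2; have k_gt1 : 0 < k - 1 by rewrite subr_gt0 ltr_ndivlMr // mul1r.
have y1E : y1 = k * y2 by rewrite divfK // ltr0_neq0.
have P1z : (stab_poly n y1 mu).[z] = (k - 1) * z ^+ n * (1 - z).
  by rewrite {1}y1E horner_stab_poly_rescale.
have : ~~ root (stab_poly n y1 mu) z.
  by apply: contraTN z_ge1 => /roots1; rewrite real_ltNge ?normr_real ?real1.
rewrite rootE P1z !mulf_eq0 !negb_or => /andP[/andP[k1_neq0 zn_neq0] z1_neq0].
have y1_neq1 : y1 != 1 by rewrite lt_eqF // (lt_trans y1_lt0 ltr01).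
have := Re_logderiv_gt0 _ z (size_stab_poly_gt1 n y1 mu y1_neq1)
  (fun a root_a => lt_le_trans (roots1 a root_a) z_ge1).
rewrite stab_poly_deriv P1z.
set a := (1 - y1) *+ n.+1; set c := a * z - n%:R.
have -> : z ^+ n * c / ((k - 1) * z ^+ n * (1 - z)) = c / (1 - z) * (k - 1)^-1.
  by field; rewrite k1_neq0 zn_neq0 z1_neq0.
have le_na : n%:R <= a.
  apply: (@le_trans _ _ n.+1%:R); first by rewrite ler_nat.
  by rewrite ler_wMn2r // lerDl oppr_ge0 ltW.
rewrite ReMr ?rpredV ?gtr0_real // le_gtF // mulr_le0_ge0 ?invr_ge0 ?(ltW k_gt1) //.
by rewrite Re_div_1subr_le0 // ler0n le_na.
Qed.
End StabPoly.

Lemma D_stab_polyE (R : rcfType) n (y : R) (mu : R[i]) :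
  D n.+1 y mu <-> forall a, root (stab_poly n y%:C mu) a -> `|a| < 1.
Proof.
split=> [Dmu a /eqP root_a | roots xi /stab_equationE /eqP].
  by apply/Dmu/stab_equationE; rewrite root_a mulr0.
by rewrite mulf_eq0 => /orP[/eqP-> | /roots //]; rewrite normr0 ltr01.
Qed.

Theorem mainTheorem9 (R : rcfType) (m : nat) (hm : (0 < m)%N) (y1 y2 : R)
  (hy12 : y1 < y2) (hy2 : y2 < 0) :
  forall mu : R[i], D m y1 mu -> D m y2 mu.
Proof.
move=> mu; case: m hm => // n _; rewrite !D_stab_polyE.
by apply: stab_roots_in_disk_mono; rewrite ltcR.
Qed.
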